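(* Let $\mathscr{V}\subset \mathbb{R}_{\max}^n$ be a max-plus cone with full support and $\{ \mathscr{H}_r \}_{r\in \mathbb{N}}$ be a decreasing sequence of half-spaces such that $\mathscr{V}\subset \mathscr{H}_r$ for all $r \in \mathbb{N}$. Then there exists a half-space $\mathscr{H}$ such that $\mathscr{H}=\cap_{r\in \mathbb{N}} \mathscr{H}_r$.
   Context: $\mathbb{R}_{\max}=\mathbb{R}\cup\{-\infty\}$ with $a\oplus b=\max(a,b)$ and $ab=a+b$; the zero element is $-\infty$. A max-plus cone is a subset $\mathscr{V}\subset\mathbb{R}_{\max}^n$ with $\lambda u\oplus\mu v\in\mathscr{V}$ for all $u,v\in\mathscr{V}$, $\lambda,\mu\in\mathbb{R}_{\max}$. A half-space is a set $\{x\in\mathbb{R}_{\max}^n : \max_i(a_i+x_i)\le \max_j(b_j+x_j)\}$ with $a,b\in\mathbb{R}_{\max}^n$. The support of $v$ is $\{k : v_k\neq-\infty\}$, the support of $\mathscr{V}$ is the union of supports of its elements, and $\mathscr{V}$ has full support if its support is $\{1,\dots,n\}$. *)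

From HB Require Import structures.
From mathcomp Require Import all_boot all_order all_algebra.
From mathcomp Require Import reals.
Set Implicit Arguments. Unset Strict Implicit. Unset Printing Implicit Defensive.
Import Order.TTheory GRing.Theory Num.Theory.
Local Open Scope ring_scope.

(* The max-plus semiring R_max = R ∪ {-oo}; None represents -oo. *)
Definition Rmax (R : realType) := option R.

Definition madd (R : realType) (a b : Rmax R) : Rmax R :=
  match a, b with
  | None, _ => b
  | _, None => a
  | Some x, Some y => Some (Num.max x y)
  end.

Definition mmul (R : realType) (a b : Rmax R) : Rmax R :=
  match a, b with
  | Some x, Some y => Some (x + y)
  | _, _ => None
  end.

Definition mle (R : realType) (a b : Rmax R) : Prop :=
  match a, b with
  | None, _ => True
  | Some _, None => False
  | Some x, Some y => x <= y
  end.

Definition mvec (R : realType) (n : nat) := 'I_n -> Rmax R.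

Definition mcomb (R : realType) (n : nat) (l : Rmax R) (u : mvec R n)
  (m : Rmax R) (v : mvec R n) : mvec R n :=
  fun i => madd (mmul l (u i)) (mmul m (v i)).

Definition mdot (R : realType) (n : nat) (a x : mvec R n) : Rmax R :=
  \big[@madd R/None]_(i < n) mmul (a i) (x i).

Definition is_cone (R : realType) (n : nat) (V : mvec R n -> Prop) : Prop :=
  forall (u v : mvec R n) (l m : Rmax R), V u -> V v -> V (mcomb l u m v).

Definition halfspace (R : realType) (n : nat) (a b : mvec R n) : mvec R n -> Prop :=
  fun x => mle (mdot a x) (mdot b x).

Definition full_support (R : realType) (n : nat) (V : mvec R n -> Prop) : Prop :=
  forall k : 'I_n, exists v, V v /\ v k <> None.

From mathcomp Require Import all_boot all_order all_algebra.
From mathcomp Require Import reals boolp classical_sets lra.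
Set Implicit Arguments. Unset Strict Implicit. Unset Printing Implicit Defensive.
Import Order.TTheory GRing.Theory Num.Theory.
Local Open Scope ring_scope.

(** Fix v in V with all entries finite; it exists by full support, taking
  max-plus sums of witnesses.  A half-space a x <= b x does not change when a_i
  is dropped where a_i <= b_i and b_i is dropped where b_i < a_i, so its two
  sides can be given disjoint supports.  Along a subsequence this sign pattern
  is constant, and after subtracting b_r v (finite, unless the H_r are
  eventually the whole space) every coefficient is bounded by -v_i, because v
  lies in H_r.  The coordinatewise limits superior c and d along the
  subsequence define the intersection: a point of every H_r satisfies
  c x <= d x; a point with c x < d x lies in infinitely many, hence in all,
  H_r; and a point with c x <= d x outside some H_r could be raised in a
  coordinate j where d_j is finite and d_j x_j attains d x, which keeps it
  outside H_r but makes the limit inequality strict. *)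

Section MaxPlusScalars.
Variable R : realType.
Implicit Types (a b c : Rmax R) (s t : R).

Definition mlt a b : bool :=
  match a, b with
  | _, None => false
  | None, Some _ => true
  | Some s, Some t => s < t
  end.

Lemma mle_refl a : mle a a.
Proof. by case: a => /=. Qed.

Lemma mle_trans a b c : mle a b -> mle b c -> mle a c.
Proof. by case: a => [?|]; case: b => [?|]; case: c => [?|] //=; apply: le_trans. Qed.

Lemma mle_antisym a b : mle a b -> mle b a -> a = b.
Proof. by case: a => [?|]; case: b => [?|] //= h1 h2; congr Some; apply/eqP; rewrite eq_le h1. Qed.

Lemma mltNge a b : mlt a b <-> ~ mle b a.
Proof.
case: a => [s|]; case: b => [t|] /=; try by split => // /(_ I).
by rewrite ltNge; split => /negP.
by split => [_ []|].
Qed.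

Lemma mleNgt a b : mle a b <-> ~~ mlt b a.
Proof. by case: a => [?|]; case: b => [?|] //=; rewrite leNgt. Qed.

Lemma mlt_None a : mlt a None = false.
Proof. by case: a. Qed.

Lemma mltW a b : mlt a b -> mle a b.
Proof. by case: a => [?|]; case: b => [?|] //=; apply: ltW. Qed.

Lemma mle_lt_trans a b c : mle a b -> mlt b c -> mlt a c.
Proof. by case: a => [?|]; case: b => [?|]; case: c => [?|] //=; apply: le_lt_trans. Qed.

Lemma mlt_le_trans a b c : mlt a b -> mle b c -> mlt a c.
Proof. by case: a => [?|]; case: b => [?|]; case: c => [?|] //=; apply: lt_le_trans. Qed.

Lemma mlt_dense a b : mlt a b -> exists m, mlt a (Some m) /\ mlt (Some m) b.
Proof.
case: a => [s|]; case: b => [t|] //= st; last by exists (t - 1); split => //=; lra.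
by exists ((s + t) / 2); split => /=; lra.
Qed.

Lemma le_madd_l a b : mle a (madd a b).
Proof. by case: a => [?|]; case: b => [?|] //=; rewrite ?le_max lexx. Qed.

Lemma le_madd_r a b : mle b (madd a b).
Proof. by case: a => [?|]; case: b => [?|] //=; rewrite ?le_max lexx ?orbT. Qed.

Lemma madd_le a b c : mle a c -> mle b c -> mle (madd a b) c.
Proof. by case: a => [?|]; case: b => [?|]; case: c => [?|] //= h1 h2; rewrite ge_max h1. Qed.

Lemma madd_lt a b c : mlt a c -> mlt b c -> mlt (madd a b) c.
Proof. by case: a => [?|]; case: b => [?|]; case: c => [?|] //= h1 h2; rewrite gt_max h1. Qed.

Lemma maddE a b : madd a b = a \/ madd a b = b.
Proof.
case: a => [s|]; case: b => [t|] /=; try by [left|right].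
by rewrite /Num.max; case: ifP; [right|left].
Qed.

Lemma mmulC a b : mmul a b = mmul b a.
Proof. by case: a => [?|]; case: b => [?|] //=; rewrite addrC. Qed.

Lemma mmulA a b c : mmul a (mmul b c) = mmul (mmul a b) c.
Proof. by case: a => [?|]; case: b => [?|]; case: c => [?|] //=; rewrite addrA. Qed.

Lemma mmul_None a : mmul a None = None.
Proof. by case: a. Qed.

Lemma mmul_maddr a b c : mmul a (madd b c) = madd (mmul a b) (mmul a c).
Proof. by case: a => [?|]; case: b => [?|]; case: c => [?|] //=; rewrite addr_maxr. Qed.

Lemma mmul_le2 a a' b b' : mle a a' -> mle b b' -> mle (mmul a b) (mmul a' b').
Proof.
by case: a => [?|]; case: a' => [?|]; case: b => [?|]; case: b' => [?|] //=; apply: lerD.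
Qed.

Lemma mmul_lt2l a b c : a <> None -> mlt b c -> mlt (mmul a b) (mmul a c).
Proof. by case: a => [?|]; case: b => [?|]; case: c => [?|] //= _; rewrite ltrD2l. Qed.

Lemma mmul_le2l_Some s b c : mle (mmul (Some s) b) (mmul (Some s) c) <-> mle b c.
Proof. by case: b => [?|]; case: c => [?|] //=; rewrite lerD2l. Qed.

Lemma mmul_Some_le a s t : mle (mmul a (Some s)) (Some t) <-> mle a (Some (t - s)).
Proof. by case: a => [?|] //=; rewrite lerBrDr. Qed.

Lemma mmul_Some_lt a s t : mlt (mmul a (Some s)) (Some t) <-> mlt a (Some (t - s)).
Proof. by case: a => [?|] //=; rewrite ltrBrDr. Qed.

Lemma mmul_Some_gt a s t : mlt (Some t) (mmul a (Some s)) <-> mlt (Some (t - s)) a.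
Proof. by case: a => [?|] //=; rewrite ltrBlDr. Qed.

Lemma mmul_lt_raise a b t :
  mlt (mmul a b) (Some t) -> exists s, mlt b (Some s) /\ mlt (mmul a (Some s)) (Some t).
Proof.
case: a => [x|]; case: b => [y|] /= h.
- by exists ((y + (t - x)) / 2); split => //=; lra.
- by exists (t - x - 1); split => //=; lra.
- by exists (y + 1); split => //=; lra.
- by exists 0.
Qed.

End MaxPlusScalars.

Section MaxPlusVectors.
Variables (R : realType) (n : nat).
Implicit Types (a b x : mvec R n) (u : Rmax R).

Definition mscale u a : mvec R n := fun i => mmul u (a i).
Definition mmask (p : pred 'I_n) a : mvec R n := fun i => if p i then a i else None.
Definition mupd x (j : 'I_n) u : mvec R n := fun i => if i == j then u else x i.

Lemma le_mdot a x i : mle (mmul (a i) (x i)) (mdot a x).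
Proof.
rewrite /mdot; elim: (index_enum _) (mem_index_enum i) => // j s IH.
rewrite inE big_cons => /orP[/eqP<-|/IH]; first exact: le_madd_l.
by move/mle_trans; apply; apply: le_madd_r.
Qed.

Lemma mdot_le a x u : (forall i, mle (mmul (a i) (x i)) u) -> mle (mdot a x) u.
Proof.
by move=> h; apply: (big_ind (fun y => mle y u)) => // y z; apply: madd_le.
Qed.

Lemma mdot_attained a x : mdot a x = None \/ exists i, mdot a x = mmul (a i) (x i).
Proof.
apply: (big_ind (fun y => y = None \/ exists i, y = mmul (a i) (x i))); first by left.
  by move=> y z hy hz; case: (maddE y z) => ->.
by move=> i _; right; exists i.
Qed.

Lemma mdot_mono a a' x x' : (forall i, mle (a i) (a' i)) -> (forall i, mle (x i) (x' i)) ->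
  mle (mdot a x) (mdot a' x').
Proof. by move=> ha hx; apply: mdot_le => i; apply: mle_trans (le_mdot a' x' i); apply: mmul_le2. Qed.

Lemma mdot_zerol a x : (forall i, a i = None) -> mdot a x = None.
Proof. by move=> a0; case: (mdot_attained a x) => [|[i ->]] //; rewrite a0. Qed.

Lemma mdot_le_None a x i : mle (mdot a x) None -> x i <> None -> a i = None.
Proof. by move/(mle_trans (le_mdot a x i)); case: (a i); case: (x i). Qed.

Lemma mdot_scale u a x : mdot (mscale u a) x = mmul u (mdot a x).
Proof.
rewrite /mdot (big_morph (mmul u) (mmul_maddr u) (mmul_None u)).
by apply: eq_bigr => i _; rewrite mmulA.
Qed.

Lemma mdot_argmax a x : (exists j, a j <> None) ->
  exists2 j, a j <> None & mle (mdot a x) (mmul (a j) (x j)).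
Proof.
move=> [j aj]; case: (mdot_attained a x) => [->|[i ->]]; first by exists j.
by case Ei: (a i) => [s|]; [exists i; rewrite ?Ei // ; apply: mle_refl | exists j].
Qed.

Lemma mdot_mask_le (p : pred 'I_n) a x : mle (mdot (mmask p a) x) (mdot a x).
Proof.
by apply: mdot_mono => i; rewrite /mmask; [case: (p i) => //|]; apply: mle_refl.
Qed.

Lemma mdot_upd_le a x j u : mle (mdot a (mupd x j u)) (madd (mdot a x) (mmul (a j) u)).
Proof.
apply: mdot_le => i; rewrite /mupd; case: eqP => [->|_]; first exact: le_madd_r.
exact: mle_trans (le_mdot a x i) (le_madd_l _ _).
Qed.

Lemma mdot_upd_ge a x j u : mle (x j) u -> mle (mdot a x) (mdot a (mupd x j u)).
Proof.
move=> xu; apply: mdot_mono => i; first exact: mle_refl.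
by rewrite /mupd; case: eqP => [->|_] //; apply: mle_refl.
Qed.

Lemma le_mdot_upd a x j u : mle (mmul (a j) u) (mdot a (mupd x j u)).
Proof. by have := le_mdot a (mupd x j u) j; rewrite /mupd eqxx. Qed.

Lemma halfspace_zerol a b x : (forall i, a i = None) -> halfspace a b x.
Proof. by move=> a0; rewrite /halfspace mdot_zerol. Qed.

Lemma halfspace_scale s a b x :
  halfspace (mscale (Some s) a) (mscale (Some s) b) x <-> halfspace a b x.
Proof. by rewrite /halfspace !mdot_scale mmul_le2l_Some. Qed.

Lemma not_halfspace_upd a b x j : ~ halfspace a b x ->
  exists s, mlt (x j) (Some s) /\ ~ halfspace a b (mupd x j (Some s)).
Proof.
move/mltNge; case Ea: (mdot a x) => [t|]; last by rewrite mlt_None.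
move=> ltb.
have [s [xs bs]] := mmul_lt_raise (mle_lt_trans (le_mdot b x j) ltb).
exists s; split => // h.
have /mltNge : mlt (mdot b (mupd x j (Some s))) (Some t).
  exact: mle_lt_trans (mdot_upd_le b x j (Some s)) (madd_lt ltb bs).
by apply; apply: mle_trans h; rewrite -Ea; apply/mdot_upd_ge/mltW.
Qed.

Section SignPattern.
Variables (p : pred 'I_n) (a b : mvec R n).
Hypothesis p_pattern : forall i, p i = mlt (b i) (a i).

Lemma mdot_mask_ge x : halfspace a b x -> mle (mdot b x) (mdot (mmask (predC p) b) x).
Proof.
move=> hab; case: (mdot_attained b x) => [->//|[j Ej]]; rewrite Ej.
have := le_mdot (mmask (predC p) b) x j; rewrite /mmask /= p_pattern.
case: ifPn => [_ //|/negPn ltj _].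
case Exj: (x j) => [z|]; last by rewrite mmul_None.
have /mltNge : mlt (mmul (b j) (x j)) (mmul (a j) (x j)).
  by rewrite ![mmul _ (x j)]mmulC; apply: mmul_lt2l => //; rewrite Exj.
by case; rewrite -Ej; apply: mle_trans hab; apply: le_mdot.
Qed.

Lemma halfspace_mask x :
  halfspace a b x <-> halfspace (mmask p a) (mmask (predC p) b) x.
Proof.
split => h.
  apply: mle_trans (mdot_mask_le p a x) _.
  exact: mle_trans h (mdot_mask_ge h).
apply: mle_trans _ (mdot_mask_le (predC p) b x); apply: mdot_le => i.
case pi: (p i).
  by apply: mle_trans h; have := le_mdot (mmask p a) x i; rewrite /mmask pi.
have := le_mdot (mmask (predC p) b) x i; rewrite /mmask /= pi; apply: mle_trans.
by apply: mmul_le2 (mle_refl _); apply/mleNgt; rewrite -p_pattern pi.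
Qed.

Lemma mdot_mask_rhs x : halfspace a b x -> mdot (mmask (predC p) b) x = mdot b x.
Proof. by move=> h; apply: mle_antisym (mdot_mask_le _ _ _) (mdot_mask_ge h). Qed.

End SignPattern.

End MaxPlusVectors.

Section Frequently.
Implicit Types P Q : nat -> Prop.

Definition eventually P := exists N, forall r, (N <= r)%N -> P r.
Definition frequently P := forall N, exists2 r, (N <= r)%N & P r.

Lemma not_frequently P : ~ frequently P -> eventually (fun r => ~ P r).
Proof.
move=> nP; apply: contrapT => nev; apply: nP => N; apply: contrapT => nN.
by apply: nev; exists N => r Nr Pr; apply: nN; exists r.
Qed.

Lemma frequently_eventually P Q :
  frequently P -> eventually Q -> frequently (fun r => P r /\ Q r).
Proof.
move=> fP [N HQ] M; have [r le Pr] := fP (maxn M N).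
exists r; first exact: leq_trans (leq_maxl _ _) le.
by split => //; apply: HQ; apply: leq_trans (leq_maxr _ _) le.
Qed.

Lemma eventually_forall (T : finType) (P : T -> nat -> Prop) :
  (forall t, eventually (P t)) -> eventually (fun r => forall t, P t r).
Proof.
move=> /choice[N HN]; exists (\max_t N t)%N => r le t.
by apply: HN; apply: leq_trans (leq_bigmax t) le.
Qed.

Lemma frequently_pigeonhole (T : finType) P (f : nat -> T) :
  frequently P -> exists t, frequently (fun r => P r /\ f r = t).
Proof.
move=> fP; apply: contrapT => nf.
have /eventually_forall[N HN] : forall t, eventually (fun r => ~ (P r /\ f r = t)).
  by move=> t; apply: not_frequently => ft; apply: nf; exists t.
by have [r Nr Pr] := fP N; apply: (HN r Nr (f r)).
Qed.

End Frequently.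

Section Limsup.
Variables (R : realType) (S : nat -> Prop) (u : nat -> Rmax R).

(* The supremum of the levels exceeded infinitely often along S, or -oo if
   there is none.  When these levels are unbounded, sup is a junk value; hence
   the bound assumed in lsup_lt. *)
Definition lsup : Rmax R :=
  if pselect (exists m, frequently (fun r => S r /\ mlt (Some m) (u r)))
  then Some (sup [set m | frequently (fun r => S r /\ mlt (Some m) (u r))]%classic)
  else None.

Lemma lsup_gt m :
  mlt (Some m) lsup -> frequently (fun r => S r /\ mlt (Some m) (u r)).
Proof.
rewrite /lsup; case: pselect => //= ne lt N.
have [y fy my] := sup_gt ne lt; have [r Nr [Sr yr]] := fy N.
by exists r => //; split => //; exact: mle_lt_trans (ltW my : mle (Some m) (Some y)) yr.
Qed.

Lemma lsup_lt K m : (forall r, S r -> mle (u r) (Some K)) ->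
  mlt lsup (Some m) -> eventually (fun r => S r -> mle (u r) (Some m)).
Proof.
move=> uK lt; apply: contrapT => nev.
have fm : frequently (fun r => S r /\ mlt (Some m) (u r)).
  move=> N; apply: contrapT => nN; apply: nev; exists N => r Nr Sr.
  by apply/mleNgt/negP => mu; apply: nN; exists r.
have ub : has_ubound [set m | frequently (fun r => S r /\ mlt (Some m) (u r))]%classic.
  exists K => y fy; have [r _ [Sr yr]] := fy 0%N.
  exact: mltW (mlt_le_trans yr (uK r Sr)).
move: lt; rewrite /lsup; case: pselect => [_ /= lt|[]]; last by exists m.
by have := ub_le_sup ub fm; rewrite leNgt lt.
Qed.

Lemma lsup_None : (forall r, u r = None) -> lsup = None.
Proof.
move=> u0; rewrite /lsup; case: pselect => // [[m fm]].
by have [r _ [_]] := fm 0%N; rewrite u0.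
Qed.

End Limsup.

Section VectorLimsup.
Variables (R : realType) (n : nat) (S : nat -> Prop) (A : nat -> mvec R n).

Definition vlsup : mvec R n := fun i => lsup S (fun r => A r i).

Lemma mdot_vlsup_gt x m : mlt (Some m) (mdot vlsup x) ->
  frequently (fun r => S r /\ mlt (Some m) (mdot (A r) x)).
Proof.
case: (mdot_attained vlsup x) => [->//|[i ->]].
case Exi: (x i) => [z|]; last by rewrite mmul_None.
move=> /mmul_Some_gt /lsup_gt fr N; have [r Nr [Sr hr]] := fr N.
exists r => //; split => //; apply: mlt_le_trans (le_mdot (A r) x i).
by rewrite Exi; apply/mmul_Some_gt.
Qed.

Lemma mdot_vlsup_lt x m : (forall i, exists K, forall r, S r -> mle (A r i) (Some K)) ->
  mlt (mdot vlsup x) (Some m) -> eventually (fun r => S r -> mle (mdot (A r) x) (Some m)).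
Proof.
move=> bnd lt.
have /eventually_forall[N HN] :
    forall i, eventually (fun r => S r -> mle (mmul (A r i) (x i)) (Some m)).
  move=> i; have := mle_lt_trans (le_mdot vlsup x i) lt.
  case: (x i) => [z|]; last by exists 0%N => r _ _; rewrite mmul_None.
  have [K AK] := bnd i; move/mmul_Some_lt/(lsup_lt AK) => [N HN].
  by exists N => r Nr Sr; apply/mmul_Some_le/HN.
by exists N => r Nr Sr; apply: mdot_le => i; apply: HN.
Qed.

End VectorLimsup.

Lemma antitone_of_step (T : Type) (H : nat -> T -> Prop) :
  (forall r x, H r.+1 x -> H r x) -> forall r0 r x, (r0 <= r)%N -> H r x -> H r0 x.
Proof.
move=> step r0 r x /subnK <-; elim: (r - r0)%N => [//|k IH].
by rewrite addSn => /step; apply: IH.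
Qed.

Lemma cone_finite_vector (R : realType) (n : nat) (V : mvec R n -> Prop) :
  is_cone V -> full_support V -> (exists w, V w) -> exists2 v, V v & forall i, v i <> None.
Proof.
move=> coneV suppV [w Vw].
suff /(_ n)[v Vv vk] : forall k, exists2 v, V v & forall i : 'I_n, (i < k)%N -> v i <> None.
  by exists v => // i; apply: vk.
elim=> [|k [v Vv vk]]; first by exists w.
have [kn|nk] := ltnP k n; last first.
  by exists v => // i _; apply: vk; apply: leq_trans (ltn_ord i) nk.
have [w' [Vw' w'k]] := suppV (Ordinal kn).
exists (mcomb (Some 0) v (Some 0) w'); first exact: coneV.
move=> i; rewrite ltnS leq_eqVlt /mcomb => /orP[/eqP ik|ik].
  have -> : i = Ordinal kn by apply: val_inj.
  by case: (v _); case: (w' _) w'k.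
by case: (w' i); case: (v i) (vk i ik).
Qed.

Section LimitHalfspace.
Variables (R : realType) (n : nat) (H : nat -> mvec R n -> Prop).
Variables (S : nat -> Prop) (A B : nat -> mvec R n) (v : mvec R n) (p : pred 'I_n).
Hypothesis H_antitone : forall r0 r x, (r0 <= r)%N -> H r x -> H r0 x.
Hypothesis S_frequently : frequently S.
Hypothesis H_AB : forall r x, S r -> H r x <-> halfspace (A r) (B r) x.
Hypothesis H_v : forall r, H r v.
Hypothesis v_finite : forall i, v i <> None.
Hypothesis B_v : forall r, S r -> mdot (B r) v = Some 0.
Hypothesis A_pattern : forall r i, ~~ p i -> A r i = None.
Hypothesis B_pattern : forall r i, p i -> B r i = None.

Let c := vlsup S A.
Let d := vlsup S B.

Lemma H_of_frequent x : (forall r, S r -> H r x) -> forall r, H r x.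
Proof. by move=> hx r0; have [r r0r Sr] := S_frequently r0; apply: H_antitone r0r (hx r Sr). Qed.

Lemma coord_ub (D : nat -> mvec R n) : (forall r, S r -> mle (mdot (D r) v) (Some 0)) ->
  forall i, exists K, forall r, S r -> mle (D r i) (Some K).
Proof.
move=> Dv i; case Evi: (v i) (@v_finite i) => [z|] // _.
exists (0 - z) => r Sr; apply/mmul_Some_le; rewrite -Evi.
exact: mle_trans (le_mdot (D r) v i) (Dv r Sr).
Qed.

Lemma A_ub : forall i, exists K, forall r, S r -> mle (A r i) (Some K).
Proof. by apply: coord_ub => r Sr; rewrite -(B_v Sr); apply/H_AB. Qed.

Lemma B_ub : forall i, exists K, forall r, S r -> mle (B r i) (Some K).
Proof. by apply: coord_ub => r Sr; rewrite B_v //; apply: mle_refl. Qed.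

Lemma limit_rhs_nonzero : exists j, d j <> None.
Proof.
apply: contrapT => d0.
have dv : mlt (mdot d v) (Some (-1)).
  by rewrite mdot_zerol // => j; apply: contrapT => dj; apply: d0; exists j.
have [N HN] := mdot_vlsup_lt B_ub dv; have [r Nr Sr] := S_frequently N.
by have := HN r Nr Sr; rewrite B_v //=; lra.
Qed.

Lemma limit_disjoint j : d j <> None -> c j = None.
Proof.
move=> dj; apply: lsup_None => r; apply: A_pattern; apply/negP => pj.
by apply: dj; apply: lsup_None => r'; apply: B_pattern.
Qed.

Lemma intersection_sub_limit x : (forall r, H r x) -> halfspace c d x.
Proof.
move=> hx; apply/mleNgt/negP => /mlt_dense[m [dm mc]].
have [r _ [[Sr Ar] Br]] :=
  frequently_eventually (mdot_vlsup_gt mc) (mdot_vlsup_lt B_ub dm) 0%N.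
by move/mltNge: Ar; apply; apply: mle_trans (Br Sr); apply/H_AB.
Qed.

Lemma H_of_limit_lt x : mlt (mdot c x) (mdot d x) -> forall r, H r x.
Proof.
move=> /mlt_dense[m [cm md]] r0.
have [r r0r [[Sr Br] Ar]] :=
  frequently_eventually (mdot_vlsup_gt md) (mdot_vlsup_lt A_ub cm) r0.
by apply: H_antitone r0r _; apply/H_AB => //; apply: mle_trans (Ar Sr) (mltW Br).
Qed.

Lemma limit_sub_intersection x : halfspace c d x -> forall r, H r x.
Proof.
move=> hx; apply: H_of_frequent => r Sr; apply/H_AB => //; apply: contrapT => nAB.
have [j dj jmax] := mdot_argmax x limit_rhs_nonzero.
have [s [xs nABs]] := not_halfspace_upd j nAB.
apply: nABs; apply/H_AB => //; apply: H_of_limit_lt.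
have dx_lt : mlt (mmul (d j) (x j)) (mdot d (mupd x j (Some s))).
  exact: mlt_le_trans (mmul_lt2l dj xs) (le_mdot_upd d x j _).
apply: mle_lt_trans (mdot_upd_le c x j (Some s)) _; apply: madd_lt.
  exact: mle_lt_trans (mle_trans hx jmax) dx_lt.
by rewrite limit_disjoint //; apply: mle_lt_trans dx_lt.
Qed.

Theorem limit_halfspace x : halfspace c d x <-> forall r, H r x.
Proof. by split; [apply: limit_sub_intersection | apply: intersection_sub_limit]. Qed.

End LimitHalfspace.

Section Intersection.
Variables (R : realType) (n : nat) (a b : nat -> mvec R n) (v : mvec R n).
Hypothesis decH : forall r x, halfspace (a r.+1) (b r.+1) x -> halfspace (a r) (b r) x.
Hypothesis H_v : forall r, halfspace (a r) (b r) v.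
Hypothesis v_finite : forall i, v i <> None.

Lemma halfspace_full_of_not_frequently :
  ~ frequently (fun r => mdot (b r) v <> None) -> forall r x, halfspace (a r) (b r) x.
Proof.
move=> /not_frequently[N bv0] r x.
apply: (antitone_of_step decH (leq_maxl r N)); apply: halfspace_zerol => i.
apply: (mdot_le_None _ (@v_finite i)).
by rewrite -(contrapT (bv0 _ (leq_maxr r N))); apply: H_v.
Qed.

Lemma halfspace_intersection : frequently (fun r => mdot (b r) v <> None) ->
  exists c d, forall x, halfspace c d x <-> (forall r, halfspace (a r) (b r) x).
Proof.
pose pattern r := [ffun i => mlt (b r i) (a r i)].
move=> /(frequently_pigeonhole pattern)[p fp].
pose S r := mdot (b r) v <> None /\ pattern r = p.
pose M r := odflt 0 (mdot (b r) v).
pose A r := mscale (Some (- M r)) (mmask p (a r)).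
pose B r := mscale (Some (- M r)) (mmask (predC p) (b r)).
have p_pattern r : S r -> forall i, p i = mlt (b r i) (a r i).
  by case=> _ <- i; rewrite ffunE.
exists (vlsup S A), (vlsup S B).
apply: (limit_halfspace (p := p) (antitone_of_step decH) fp _ H_v v_finite)
  => [r x Sr|r Sr|r i /negbTE pi|r i pi].
- by rewrite halfspace_scale; apply: halfspace_mask; apply: p_pattern.
- rewrite mdot_scale (mdot_mask_rhs (p_pattern r Sr) (@H_v r)).
  by case: Sr; rewrite /M; case: (mdot _ _) => //= t _ _; rewrite addNr.
- by rewrite /A /mscale /mmask pi mmul_None.
- by rewrite /B /mscale /mmask /= pi.
Qed.

End Intersection.

Theorem lemma3p3 (R : realType) (n : nat) (V : mvec R n -> Prop)
  (a b : nat -> mvec R n) :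
  is_cone V -> full_support V ->
  (forall r x, halfspace (a r.+1) (b r.+1) x -> halfspace (a r) (b r) x) ->
  (forall r x, V x -> halfspace (a r) (b r) x) ->
  exists (c d : mvec R n),
    forall x, halfspace c d x <-> (forall r, halfspace (a r) (b r) x).
Proof.
move=> coneV suppV decH VH.
have [[w Vw]|noV] := pselect (exists w, V w); last first.
  exists (fun=> None), (fun=> None) => x; split=> _; last exact: halfspace_zerol.
  move=> r; apply: halfspace_zerol => i.
  by have [w [Vw _]] := suppV i; case: noV; exists w.
have [v Vv v_fin] := cone_finite_vector coneV suppV (ex_intro _ w Vw).
have H_v r := VH r v Vv.
have [fb|nfb] := pselect (frequently (fun r => mdot (b r) v <> None)).
  exact: halfspace_intersection decH H_v v_fin fb.
exists (fun=> None), (fun=> None) => x; split=> _; last exact: halfspace_zerol.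
by move=> r; apply: (halfspace_full_of_not_frequently decH H_v v_fin nfb).
Qed.
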